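(* Let $T$ be a node with $t$ cases, let $R_0$ be the residual sum of squares of the current residuals in $T$ (before fitting), and let $\Delta_1,\Delta_2$ and $v_1,v_2$ be the impurity gains and degrees of freedom of two regression models fitted on $T$. Then: (i) If model 1 does better than CON, i.e. $\mathrm{BIC}_{con}>\mathrm{BIC}_1$, then $t\Delta_1/R_0>C(v_1,t)>0$ for some positive function $C$ depending only on $v_1$ and $t$. (ii) If $\mathrm{BIC}_{con}>\mathrm{BIC}_1$ and $\mathrm{BIC}_2>\mathrm{BIC}_1$ with $v_2\ge v_1$, then $\frac{\Delta_1}{\Delta_2}\ge\frac{v_1-1}{v_2-1}$. Moreover, if CON is chosen at a node, it will also be chosen in subsequent model selections on that node.
   Context: For a model fitted by least squares to the current residuals $r$ of the $t$ cases in a node $T$, the impurity gain is $\Delta=(R_0-\mathrm{RSS})/t$, where $\mathrm{RSS}$ is the residual sum of squares after the fit, so $\mathrm{RSS}=R_0-t\Delta$. The BIC of a model with $v$ degrees of freedom is $\mathrm{BIC}=t\log(\mathrm{RSS}/t)+v\log t$. CON is the constant (mean) fit, with $v=1$. In the PILOT algorithm, in each node the model (among CON, LIN, PCON, BLIN, PLIN with $v=1,2,5,5,7$) with smallest BIC is selected; ''subsequent model selections'' means selection applied again to the residuals of the node after the fit. *)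

From mathcomp Require Import all_boot all_order all_algebra.
From mathcomp Require Import all_classical all_reals all_analysis.
Import Order.TTheory GRing.Theory Num.Theory.
Local Open Scope ring_scope.
Local Open Scope classical_set_scope.

Set Implicit Arguments.
Unset Strict Implicit.
Unset Printing Implicit Defensive.

Definition rss {R : realType} {t : nat} (r f : 'I_t -> R) : R :=
  \sum_(i < t) (r i - f i) ^+ 2.

Definition rss0 {R : realType} {t : nat} (r : 'I_t -> R) : R :=
  \sum_(i < t) r i ^+ 2.

Definition gain {R : realType} {t : nat} (r f : 'I_t -> R) : R :=
  (rss0 r - rss r f) / t%:R.

Definition BIC {R : realType} (t : nat) (RSS : R) (v : nat) : R :=
  t%:R * ln (RSS / t%:R) + v%:R * ln t%:R.

Definition BIC_of {R : realType} {t : nat} (r f : 'I_t -> R) (v : nat) : R :=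
  BIC t (rss r f) v.

(* CON: least squares constant fit = the mean, with v = 1 *)
Definition mean {R : realType} {t : nat} (r : 'I_t -> R) : R :=
  (\sum_(i < t) r i) / t%:R.

Definition con_fit {R : realType} {t : nat} (r : 'I_t -> R) : 'I_t -> R :=
  fun _ => mean r.

Definition BIC_con {R : realType} {t : nat} (r : 'I_t -> R) : R :=
  BIC_of r (con_fit r) 1.

(* The PILOT candidate models; X i j = value of predictor j for case i *)
Inductive model := CON | LIN | PCON | BLIN | PLIN.

Definition df (m : model) : nat :=
  match m with CON => 1 | LIN => 2 | PCON => 5 | BLIN => 5 | PLIN => 7 end%N.

Definition model_class {R : realType} {t p : nat} (X : 'I_t -> 'I_p -> R)
  (m : model) : set ('I_t -> R) :=
  match m with
  | CON => [set f | exists a : R, forall i, f i = a]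
  | LIN => [set f | exists (j : 'I_p) (a b : R), forall i, f i = a + b * X i j]
  | PCON => [set f | exists (j : 'I_p) (s a b : R),
              forall i, f i = if X i j <= s then a else b]
  | BLIN => [set f | exists (j : 'I_p) (s a b c : R),
              forall i, f i = a + b * X i j + c * Num.max (X i j - s) 0]
  | PLIN => [set f | exists (j : 'I_p) (s a1 b1 a2 b2 : R),
              forall i, f i = if X i j <= s then a1 + b1 * X i j
                                            else a2 + b2 * X i j]
  end.

Definition ls_fit {R : realType} {t : nat} (M : set ('I_t -> R))
  (r f : 'I_t -> R) : Prop :=
  M f /\ forall g, M g -> rss r f <= rss r g.

Definition selected {R : realType} {t : nat} (r : 'I_t -> R)
  (fits : model -> 'I_t -> R) (m : model) : Prop :=
  forall m', BIC_of r (fits m) (df m) <= BIC_of r (fits m') (df m').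

From mathcomp Require Import all_boot all_order all_algebra.
From mathcomp Require Import all_classical all_reals all_analysis.
From mathcomp Require Import ring lra.
Import Order.TTheory GRing.Theory Num.Theory.
Local Open Scope ring_scope.

(* Since BIC = t log (RSS / t) + v log t, the inequality BIC_1 < BIC_2 says
   exactly RSS_1 * t^((v_1 - v_2) / t) < RSS_2.  Against CON this reads
   RSS_1 * t^((v_1 - 1) / t) < RSS_con <= R_0, which is (i) with
   C(v, t) = 1 - t^(-(v - 1) / t).  Linearising both comparisons of model 1
   (against CON and against model 2) with e^x >= 1 + x and combining them
   gives (ii).  Finally, the CON fit is a constant c, so the next residuals
   are r - c; every model class is closed under adding constants, hence every
   least-squares RSS, and with it every BIC, is unchanged and CON is selected
   again. *)

Lemma ratio_ge_of_linear_bounds (R : realFieldType) (a b u x1 x2 R0 : R) :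
  1 < a -> a <= b -> 0 < R0 - x2 ->
  x1 * (1 + (a - 1) * u) < R0 -> x1 * (1 + (a - b) * u) < x2 ->
  (a - 1) / (b - 1) <= (R0 - x1) / (R0 - x2).
Proof.
move=> a_gt1 a_le_b drop2_gt0 bound1 bound2.
(* (a-1)(R0-x2) = (a-1)(R0-x1) + (a-1)(x1-x2) <= (a-1)(R0-x1) + (b-a)(R0-x1) *)
have drop1_bound : (b - a) * (x1 * (a - 1) * u) <= (b - a) * (R0 - x1).
  by rewrite ler_wpM2l ?subr_ge0 //; apply/ltW; lra.
have rss12_bound : (a - 1) * (x1 - x2) <= (a - 1) * (x1 * (b - a) * u).
  by rewrite ler_wpM2l ?subr_ge0 ?ltW //; lra.
have b_gt1 : 0 < b - 1 by rewrite subr_gt0 (lt_le_trans a_gt1).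
rewrite ler_pdivrMr // mulrAC ler_pdivlMr //.
lra.
Qed.

Section BIC.
Set Implicit Arguments.
Unset Strict Implicit.
Variable R : realType.

Lemma lt_BIC (t : nat) (x y : R) (v w : nat) :
  (1 < t)%N -> 0 < x -> 0 < y ->
  (BIC t x v < BIC t y w) = (x * expR ((v%:R - w%:R) * (ln t%:R / t%:R)) < y).
Proof.
move=> t_gt1 x_gt0 y_gt0.
have t_gt0 : (0 : R) < t%:R by rewrite ltr0n (ltn_trans _ t_gt1).
rewrite -[in RHS]ltr_ln ?posrE ?mulr_gt0 ?expR_gt0 //.
rewrite lnM ?posrE ?expR_gt0 // expRK.
rewrite /BIC !ln_div ?posrE // -[in RHS](ltr_pM2l t_gt0) [in RHS]mulrDr.
suff -> : t%:R * ((v%:R - w%:R) * (ln t%:R / t%:R))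
          = (v%:R - w%:R) * ln t%:R :> R.
  by apply/idP/idP => ?; lra.
by field; rewrite gt_eqF.
Qed.

Lemma lt_BIC_linear (t : nat) (x y : R) (v w : nat) :
  (1 < t)%N -> 0 < x -> 0 < y ->
  BIC t x v < BIC t y w -> x * (1 + (v%:R - w%:R) * (ln t%:R / t%:R)) < y.
Proof.
move=> t_gt1 x_gt0 y_gt0; rewrite lt_BIC //; apply: le_lt_trans.
by rewrite ler_pM2l // expR_ge1Dx.
Qed.

Lemma rss_con (t : nat) (r : 'I_t -> R) :
  rss r (con_fit r) = rss0 r - t%:R * mean r ^+ 2.
Proof.
case: t r => [|t] r; first by rewrite /rss /rss0 !big_ord0 mul0r subr0.
rewrite /rss /rss0 /con_fit; set m := mean r.
have sumE : \sum_(i < t.+1) r i = m * t.+1%:R by rewrite /m /mean mulfVK.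
have sqrE i : (r i - m) ^+ 2 = r i ^+ 2 - (m * 2) * r i + m ^+ 2 by ring.
rewrite (eq_bigr _ (fun i _ => sqrE i)) big_split /= sumrB -mulr_sumr sumE.
by rewrite sumr_const card_ord; ring.
Qed.

Lemma rss_con_le (t : nat) (r : 'I_t -> R) : rss r (con_fit r) <= rss0 r.
Proof. by rewrite rss_con gerBl mulr_ge0 ?sqr_ge0. Qed.

Lemma mul_size_gain (t : nat) (r f : 'I_t -> R) :
  (0 < t)%N -> t%:R * gain r f = rss0 r - rss r f.
Proof. by move=> t_gt0; rewrite /gain mulrC divfK // pnatr_eq0 -lt0n. Qed.

Definition bic_threshold (v t : nat) : R :=
  1 - expR (- ((v%:R - 1) * (ln t%:R / t%:R))).

Lemma bic_threshold_gt0 (v t : nat) :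
  (2 <= v)%N -> (1 < t)%N -> 0 < bic_threshold v t.
Proof.
move=> v_ge2 t_gt1.
have t_gt0 : (0 : R) < t%:R by rewrite ltr0n (ltn_trans _ t_gt1).
rewrite /bic_threshold subr_gt0 expR_lt1 oppr_lt0 mulr_gt0 ?divr_gt0 //.
- by rewrite subr_gt0 ltr1n.
- by rewrite ln_gt0 // ltr1n.
Qed.

Lemma relative_drop_gt (x xc R0 y : R) :
  0 < x -> x * expR y < xc -> xc <= R0 -> 1 - expR (- y) < (R0 - x) / R0.
Proof.
move=> x_gt0 x_lt xc_le.
have R0_gt0 : 0 < R0.
  by apply: lt_le_trans xc_le; rewrite (lt_trans _ x_lt) ?mulr_gt0 ?expR_gt0.
rewrite mulrBl divff ?gt_eqF // ltrD2l ltrN2 ltr_pdivrMr // mulrC.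
apply: lt_le_trans (ler_wpM2r (expR_ge0 (- y)) xc_le).
have -> : x = x * expR y * expR (- y).
  by rewrite -mulrA -expRD subrr expR0 mulr1.
by rewrite ltr_pM2r ?expR_gt0.
Qed.

Lemma gain_gt_bic_threshold (t : nat) (r f : 'I_t -> R) (v : nat) :
  (1 < t)%N -> 0 < rss r (con_fit r) -> 0 < rss r f ->
  BIC_of r f v < BIC_con r -> bic_threshold v t < t%:R * gain r f / rss0 r.
Proof.
move=> t_gt1 con_gt0 f_gt0; rewrite /BIC_con /BIC_of lt_BIC // mulr1n => bic_lt.
rewrite mul_size_gain ?(ltn_trans _ t_gt1) //.
exact: relative_drop_gt f_gt0 bic_lt (rss_con_le r).
Qed.

Lemma gain_ratio_ge (t : nat) (r f1 f2 : 'I_t -> R) (v1 v2 : nat) :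
  (2 <= v1)%N -> (v1 <= v2)%N -> (1 < t)%N ->
  0 < rss r (con_fit r) -> 0 < rss r f1 -> 0 < rss r f2 -> 0 < gain r f2 ->
  BIC_of r f1 v1 < BIC_con r -> BIC_of r f1 v1 < BIC_of r f2 v2 ->
  (v1%:R - 1) / (v2%:R - 1) <= gain r f1 / gain r f2.
Proof.
move=> v1_ge2 v1_le_v2 t_gt1 con_gt0 f1_gt0 f2_gt0 gain2_gt0 bic1_lt_con bic1_lt_2.
have t_gt0 : (0 < t)%N by rewrite (ltn_trans _ t_gt1).
have := lt_BIC_linear t_gt1 f1_gt0 con_gt0 bic1_lt_con.
rewrite mulr1n => bound1.
have bound2 := lt_BIC_linear t_gt1 f1_gt0 f2_gt0 bic1_lt_2.
have drop2_gt0 : 0 < rss0 r - rss r f2.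
  by rewrite -mul_size_gain // mulr_gt0 // ltr0n.
have -> : gain r f1 / gain r f2 = (rss0 r - rss r f1) / (rss0 r - rss r f2).
  by rewrite /gain; field; rewrite gt_eqF // pnatr_eq0 -lt0n.
apply: ratio_ge_of_linear_bounds drop2_gt0 _ bound2; rewrite ?ltr1n ?ler_nat //.
exact: lt_le_trans bound1 (rss_con_le r).
Qed.

End BIC.

Section Reselection.
Set Implicit Arguments.
Unset Strict Implicit.
Variables (R : realType) (t p : nat) (X : 'I_t -> 'I_p -> R).

Lemma model_class_shift (m : model) (f : 'I_t -> R) (c : R) :
  model_class X m f -> model_class X m (fun i => f i + c).
Proof.
case: m => /=.
- by case=> a fE; exists (a + c) => i; rewrite fE.
- by case=> j [a [b fE]]; exists j, (a + c), b => i; rewrite fE; ring.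
- case=> j [s [a [b fE]]]; exists j, s, (a + c), (b + c) => i.
  by rewrite fE; case: ifP.
- case=> j [s [a [b [d fE]]]]; exists j, s, (a + c), b, d => i.
  by rewrite fE; ring.
- case=> j [s [a1 [b1 [a2 [b2 fE]]]]].
  exists j, s, (a1 + c), b1, (a2 + c), b2 => i.
  by rewrite fE; case: ifP => _; ring.
Qed.

Lemma rss_shift (r r' f : 'I_t -> R) (c : R) :
  (forall i, r' i = r i - c) -> rss r' f = rss r (fun i => f i + c).
Proof.
by move=> r'E; apply: eq_bigr => i _; rewrite r'E; congr (_ ^+ 2); ring.
Qed.

Lemma ls_fit_rss_shift (m : model) (r r' f f' : 'I_t -> R) (c : R) :
  (forall i, r' i = r i - c) ->
  ls_fit (model_class X m) r f -> ls_fit (model_class X m) r' f' ->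
  rss r' f' = rss r f.
Proof.
move=> r'E [fM f_min] [f'M f'_min].
have rss_fE : rss r f = rss r' (fun i => f i - c).
  by rewrite (rss_shift _ r'E); apply: eq_bigr => i _; rewrite subrK.
apply/le_anti/andP; split.
- by rewrite rss_fE; apply: f'_min; apply: model_class_shift.
- by rewrite (rss_shift _ r'E); apply: f_min; apply: model_class_shift.
Qed.

Lemma selected_shift (r r' : 'I_t -> R) (fs fs' : model -> 'I_t -> R)
    (c : R) (m : model) :
  (forall i, r' i = r i - c) ->
  (forall m, ls_fit (model_class X m) r (fs m)) ->
  (forall m, ls_fit (model_class X m) r' (fs' m)) ->
  selected r fs m -> selected r' fs' m.
Proof.
move=> r'E fit fit' sel m'.
by rewrite /BIC_of !(ls_fit_rss_shift r'E (fit _) (fit' _)); apply: sel.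
Qed.

End Reselection.

Theorem proposition2 (R : realType) :
  (* (i) *)
  (exists C : nat -> nat -> R,
     (forall v t : nat, (2 <= v)%N -> (1 < t)%N -> 0 < C v t) /\
     forall (t : nat) (r f1 : 'I_t -> R) (v1 : nat),
       (2 <= v1)%N -> (1 < t)%N ->
       0 < rss r (con_fit r) -> 0 < rss r f1 ->
       BIC_of r f1 v1 < BIC_con r ->
       C v1 t < t%:R * gain r f1 / rss0 r)
  /\
  (* (ii) *)
  (forall (t : nat) (r f1 f2 : 'I_t -> R) (v1 v2 : nat),
     (2 <= v1)%N -> (v1 <= v2)%N -> (1 < t)%N ->
     0 < rss r (con_fit r) -> 0 < rss r f1 -> 0 < rss r f2 ->
     0 < gain r f2 ->
     BIC_of r f1 v1 < BIC_con r -> BIC_of r f1 v1 < BIC_of r f2 v2 ->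
     (v1%:R - 1) / (v2%:R - 1) <= gain r f1 / gain r f2)
  /\
  (* moreover: once CON is chosen, it stays chosen in subsequent selections *)
  (forall (t p : nat) (X : 'I_t -> 'I_p -> R)
          (rs : nat -> 'I_t -> R) (fs : nat -> model -> 'I_t -> R),
     (forall k m, ls_fit (model_class X m) (rs k) (fs k m)) ->
     (forall k, selected (rs k) (fs k) CON ->
                forall i, rs k.+1 i = rs k i - fs k CON i) ->
     selected (rs 0%N) (fs 0%N) CON ->
     forall k, selected (rs k) (fs k) CON).
Proof.
split; [|split].
- exists (bic_threshold R); split => [v t|t r f1 v1 _].
  + exact: bic_threshold_gt0.
  + exact: gain_gt_bic_threshold.
- exact: gain_ratio_ge.
- move=> t p X rs fs fit next_residuals sel0; elim=> // k sel_k.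
  have [[c fs_CON] _] := fit k CON.
  apply: (selected_shift (c := c) _ (fit k) (fit k.+1) sel_k) => i.
  by rewrite next_residuals // fs_CON.
Qed.
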